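(* Let $A$ be a finite-dimensional Leibniz algebra over a field. Then $A$ is nilpotent if and only if $A$ satisfies condition $k$, i.e. the only subalgebra $K$ of $A$ with $K+A^2=A$ is $K=A$.
   Context: A (left) Leibniz algebra is an algebra satisfying $x(yz)=(xy)z+y(xz)$ for all $x,y,z$. $A^2=AA$; lower central series $A^1=A$, $A^{j+1}=AA^j$; $A$ is nilpotent if $A^t=0$ for some $t$. *)

From HB Require Import structures.
From mathcomp Require Import all_boot all_order all_algebra.
Set Implicit Arguments. Unset Strict Implicit. Unset Printing Implicit Defensive.
Import GRing.Theory.
Local Open Scope ring_scope.

Section Leibniz.
Variables (F : fieldType) (V : vectType F) (mul : V -> V -> V).

Definition bilinear_mul : Prop :=
  (forall (a : F) x y z, mul (a *: x + y) z = a *: mul x z + mul y z) /\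
  (forall (a : F) x y z, mul x (a *: y + z) = a *: mul x y + mul x z).

Definition left_leibniz : Prop :=
  forall x y z, mul x (mul y z) = mul (mul x y) z + mul y (mul x z).

Definition leibniz_algebra : Prop := bilinear_mul /\ left_leibniz.

(* product UW of subspaces: the span of all products u w, u in U, w in W;
   by bilinearity this is the span of products of basis vectors. *)
Definition prodv (U W : {vspace V}) : {vspace V} :=
  <<[seq mul u w | u <- vbasis U, w <- vbasis W]>>%VS.

(* lower central series, shifted: lcs j = A^(j+1); lcs 0 = A, lcs (j+1) = A (lcs j) *)
Fixpoint lcs (j : nat) : {vspace V} :=
  if j is j'.+1 then prodv fullv (lcs j') else fullv.

Definition nilpotent_alg : Prop := exists t : nat, lcs t = 0%VS.

Definition subalgebra (K : {vspace V}) : Prop :=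
  forall x y, x \in K -> y \in K -> mul x y \in K.

Definition condition_k : Prop :=
  forall K : {vspace V}, subalgebra K -> ((K + prodv fullv fullv)%VS = fullv) -> K = fullv.

End Leibniz.

From HB Require Import structures.
From mathcomp Require Import all_boot all_order all_algebra.
From mathcomp Require Import zify.
From Stdlib Require Import Classical_Prop.
Set Implicit Arguments. Unset Strict Implicit. Unset Printing Implicit Defensive.
Import GRing.Theory.
Local Open Scope ring_scope.

(* Nilpotent => k.  Since A^i A^j <= A^(i+j), a subalgebra supplementing A^2
   supplements every A^j (supplement_lcs); take j with A^j = 0.

   k => nilpotent, in two steps.
   1. Every left multiplication L_x is nilpotent.  L_x is a derivation by the
      Leibniz identity, so the null component of its Fitting decomposition
      A = ker L_x^n + im L_x^n (n >= dim A) is a subalgebra, while the other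
      component lies in A^2; condition k makes the null component all of A.
   2. Engel's theorem for Leibniz algebras: if every L_x is nilpotent then
      A B < B for each nonzero left ideal B (left_ideal_shrinks), so the
      lower central series, which must stall within dim A steps, reaches 0.
      The proof is the classical induction over subalgebras, carried out for
      subalgebras containing the left annihilator lann, which contains all
      squares and on which the left action is trivial. *)

Section Subspaces.
Variables (F : fieldType) (V : vectType F).
Local Notation dimV := (\dim (fullv : {vspace V})).

Lemma span_ind (s : seq V) (P : V -> Prop) :
  P 0 -> (forall x y, P x -> P y -> P (x + y)) -> (forall a x, P x -> P (a *: x)) ->
  (forall x, x \in s -> P x) -> forall v, v \in <<s>>%VS -> P v.
Proof.
move=> P0 PD PZ Ps v; rewrite -[s]/(tval (in_tuple s)) => /coord_span ->.
by apply: (big_ind P) => // i _; apply/PZ/Ps/mem_nth.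
Qed.

Lemma nat_chain_stalls (a : nat -> nat) (b : nat) :
  (forall j, a j <= a j.+1)%N -> (forall j, a j <= b)%N ->
  exists2 j, (j <= b)%N & a j = a j.+1.
Proof.
move=> incr bnd.
suff [[j lt_jb eq_j] | ] : (exists2 j, (j < b.+1)%N & a j = a j.+1) \/ (b.+1 <= a b.+1)%N.
- by exists j.
- by rewrite leqNgt ltnS bnd.
elim: b.+1 => [|k [[j lt_jk eq_j] | le_k]]; [by right | by left; exists j => //; lia |].
have [eq_k | ne_k] := eqVneq (a k) (a k.+1); first by left; exists k.
by right; have := incr k; lia.
Qed.

Lemma increasing_chain_stalls (U : nat -> {vspace V}) :
  (forall j, (U j <= U j.+1)%VS) -> exists2 j, (j <= dimV)%N & U j = U j.+1.
Proof.
move=> incr; have [j le_jd eq_dim] := @nat_chain_stalls (fun j => \dim (U j)) dimV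
  (fun j => dimvS (incr j)) (fun j => dimvS (subvf (U j))).
by exists j => //; apply/eqP; rewrite eqEdim incr /= eq_dim.
Qed.

Lemma decreasing_chain_stalls (U : nat -> {vspace V}) :
  (forall j, (U j.+1 <= U j)%VS) -> exists2 j, (j <= dimV)%N & U j = U j.+1.
Proof.
move=> decr; have dimU j : (\dim (U j) <= dimV)%N by apply/dimvS/subvf.
have [j le_jd eq_codim] := @nat_chain_stalls (fun j => dimV - \dim (U j))%N dimV
  (fun j => leq_sub2l _ (dimvS (decr j))) (fun j => leq_subr _ _).
exists j => //; apply/eqP; rewrite eq_sym eqEdim decr /=.
by move: eq_codim (dimU j) (dimU j.+1); lia.
Qed.

Lemma exists_maximal (P : {vspace V} -> Prop) (M0 : {vspace V}) :
  P M0 -> exists2 M, P M & forall X, P X -> (M <= X)%VS -> X = M.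
Proof.
have [n] := ubnP (dimV - \dim M0)%N; elim: n M0 => // n IH M0 codim PM0.
have [[X [PX sM0X neX]] | nobigger] :=
  classic (exists X, [/\ P X, (M0 <= X)%VS & X != M0]).
- apply: (IH X) PX.
  have lt_dim : (\dim M0 < \dim X)%N.
    by rewrite ltn_neqAle (dimv_leqif_eq sM0X) eq_sym neX dimvS.
  have := dimvS (subvf X); lia.
- exists M0 => // X PX sM0X; have [// | neX] := eqVneq X M0.
  by case: nobigger; exists X.
Qed.

Lemma exists_maximal_proper (Q : {vspace V} -> Prop) (B M0 : {vspace V}) :
  Q M0 -> (M0 <= B)%VS -> M0 != B ->
  exists M : {vspace V}, [/\ Q M, (M <= B)%VS, M != B &
    forall w, w \in B -> w \notin M -> Q (M + <[w]>)%VS -> (M + <[w]>)%VS = B].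
Proof.
move=> QM0 sM0B neM0B.
have [M [QM sMB neMB] maxM] :=
  @exists_maximal (fun X => [/\ Q X, (X <= B)%VS & X != B]) M0 (And3 QM0 sM0B neM0B).
exists M; split=> // w Bw Mw' QMw; have [// | neB] := eqVneq (M + <[w]>)%VS B.
have sMwB : (M + <[w]> <= B)%VS by rewrite subv_add sMB -memvE.
have eqM := maxM _ (And3 QMw sMwB neB) (addvSl M <[w]>).
by move: Mw'; rewrite -eqM memvE addvSr.
Qed.

End Subspaces.

Section Fitting.
Variables (F : fieldType) (V : vectType F) (f : 'End(V)).
Local Notation dimV := (\dim (fullv : {vspace V})).

Definition fpow (n : nat) : 'End(V) := iter n (fun g => f \o g)%VF \1%VF.

Lemma fpowE n v : fpow n v = iter n f v.
Proof. by elim: n => [|n IH] /=; rewrite ?id_lfunE // comp_lfunE IH. Qed.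

Lemma lker_fpowS n : (lker (fpow n) <= lker (fpow n.+1))%VS.
Proof.
apply/subvP => v; rewrite !memv_ker !fpowE /= => /eqP ->.
by rewrite linear0.
Qed.

Lemma lker_fpow_stable n k : (dimV <= n)%N -> lker (fpow (n + k)) = lker (fpow n).
Proof.
have [j le_jd eq_j] := increasing_chain_stalls lker_fpowS.
have fixed m : lker (fpow (j + m)) = lker (fpow j).
  elim: m => [|m IH]; first by rewrite addn0.
  apply/subv_anti/andP; split; last by rewrite -{1}IH addnS lker_fpowS.
  apply/subvP => v; rewrite addnS eq_j !memv_ker !fpowE !iterSr -!fpowE.
  by rewrite -!memv_ker IH.
by move=> le_dn; rewrite -(subnKC (leq_trans le_jd le_dn)) -addnA !fixed.
Qed.

Lemma fitting_decomposition n : (dimV <= n)%N ->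
  (lker (fpow n) + limg (fpow n) = fullv)%VS.
Proof.
move=> le_dn.
have cap0 : (lker (fpow n) :&: limg (fpow n) = 0)%VS.
  apply/eqP; rewrite -subv0; apply/subvP => v /memv_capP [kerv /memv_imgP [u _ def_v]].
  rewrite def_v in kerv *; rewrite memv0 -memv_ker -(lker_fpow_stable n le_dn).
  by rewrite memv_ker fpowE iterD -!fpowE -memv_ker.
apply/eqP; rewrite eqEdim subvf /= -(limg_ker_dim (fpow n) fullv) capfv.
by have := dimv_sum_cap (lker (fpow n)) (limg (fpow n)); rewrite cap0 dimv0 addn0 => ->.
Qed.

End Fitting.

Section BilinearProduct.
Variables (F : fieldType) (V : vectType F) (mul : V -> V -> V).
Hypothesis mul_bilinear : bilinear_mul mul.
Local Notation dimV := (\dim (fullv : {vspace V})).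

Lemma mulDl x y z : mul (x + y) z = mul x z + mul y z.
Proof. by have := (proj1 mul_bilinear) 1 x y z; rewrite !scale1r. Qed.
Lemma mulDr x y z : mul x (y + z) = mul x y + mul x z.
Proof. by have := (proj2 mul_bilinear) 1 x y z; rewrite !scale1r. Qed.
Lemma mul0l z : mul 0 z = 0.
Proof. by apply: (addrI (mul 0 z)); rewrite addr0 -mulDl addr0. Qed.
Lemma mul0r z : mul z 0 = 0.
Proof. by apply: (addrI (mul z 0)); rewrite addr0 -mulDr addr0. Qed.
Lemma mulZl a x z : mul (a *: x) z = a *: mul x z.
Proof. by have := (proj1 mul_bilinear) a x 0 z; rewrite !addr0 mul0l addr0. Qed.
Lemma mulZr a x z : mul x (a *: z) = a *: mul x z.
Proof. by have := (proj2 mul_bilinear) a x z 0; rewrite !addr0 mul0r addr0. Qed.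

Definition lmul (x : V) : V -> V := mul x.
HB.instance Definition _ x := GRing.isLinear.Build F V V _ (lmul x)
  (fun a => proj2 mul_bilinear a x).
Definition Lmul (x : V) : 'End(V) := linfun (lmul x).

Lemma LmulE x v : Lmul x v = mul x v.
Proof. exact: lfunE. Qed.

Lemma Lmul_linear : linear Lmul.
Proof.
by move=> a x y; apply/lfunP => v; rewrite !lfun_simp /= /lmul mulDl mulZl.
Qed.
HB.instance Definition _ := GRing.isLinear.Build F V 'End(V) _ Lmul
  Lmul_linear.

Lemma iter_LmulE x n v : iter n (mul x) v = fpow (Lmul x) n v.
Proof. by rewrite fpowE; elim: n => //= n ->; rewrite LmulE. Qed.

Lemma mem_prodv (U W : {vspace V}) u w :
  u \in U -> w \in W -> mul u w \in prodv mul U W.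
Proof.
rewrite -{1}(span_basis (vbasisP U)) -{1}(span_basis (vbasisP W)) => Uu Ww.
move: u Uu; apply: span_ind => [|x y Px Py|a x Px|u Uu]; rewrite ?mul0l ?mulDl ?mulZl.
- exact: mem0v.
- exact: memvD.
- exact: memvZ.
move: w Ww; apply: span_ind => [|x y Px Py|a x Px|w Ww]; rewrite ?mul0r ?mulDr ?mulZr.
- exact: mem0v.
- exact: memvD.
- exact: memvZ.
by apply/memv_span/allpairs_f.
Qed.

Lemma prodv_ind (U W : {vspace V}) (P : V -> Prop) :
  P 0 -> (forall x y, P x -> P y -> P (x + y)) -> (forall a x, P x -> P (a *: x)) ->
  (forall u w, u \in U -> w \in W -> P (mul u w)) ->
  forall y, y \in prodv mul U W -> P y.
Proof.
move=> P0 PD PZ Pmul; apply: span_ind => // _ /allpairsP [[u w] /= [Uu Ww ->]].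
by apply: Pmul; apply: vbasis_mem.
Qed.

Lemma prodv_sub (U W X : {vspace V}) :
  (forall u w, u \in U -> w \in W -> mul u w \in X) -> (prodv mul U W <= X)%VS.
Proof.
by move=> UWX; apply/subvP; apply: prodv_ind => //; [apply: mem0v|apply: memvD|apply: memvZ].
Qed.

Lemma derivation_nil (D : 'End(V)) :
  (forall y z, D (mul y z) = mul (D y) z + mul y (D z)) ->
  forall a b y z, iter a D y = 0 -> iter b D z = 0 -> iter (a + b) D (mul y z) = 0.
Proof.
move=> Dmul a b; have [n] := ubnP (a + b)%N; elim: n a b => // n IH.
have iter0 k : iter k D 0 = 0 by rewrite -fpowE linear0.
move=> [|a] [|b] lt_ab y z Dy Dz.
- by rewrite (Dy : y = 0) mul0l iter0.
- by rewrite (Dy : y = 0) mul0l iter0.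
- by rewrite (Dz : z = 0) mul0r iter0.
rewrite addSn iterSr Dmul -fpowE linearD /= !fpowE.
rewrite (IH a b.+1) -?iterSr // add0r -addSnnS.
by rewrite (IH a.+1 b) -?iterSr //; lia.
Qed.

Hypothesis mul_leibniz : left_leibniz mul.

Lemma lcs_mul i j y z :
  y \in lcs mul i -> z \in lcs mul j -> mul y z \in lcs mul (i + j).+1.
Proof.
elim: i j y z => [|i IH] j y z Ay Az; first by apply: mem_prodv (memvf _) _.
move: y Ay; apply: prodv_ind => [|x x' Px Px'|a x Px|u w _ Aw];
  rewrite ?mul0l ?mulDl ?mulZl ?mem0v ?memvD ?memvZ //.
have -> : mul (mul u w) z = mul u (mul w z) - mul w (mul u z).
  by rewrite mul_leibniz addrK.
apply: memvB; first by rewrite addSn; apply: mem_prodv (memvf _) (IH _ _ _ Aw Az).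
by rewrite addSn -addnS; apply: IH j.+1 w _ Aw (mem_prodv (memvf _) Az).
Qed.

Lemma lcs_subS j : (lcs mul j.+1 <= lcs mul j)%VS.
Proof.
elim: j => [|j IH]; first exact: subvf.
by apply: prodv_sub => u w _ Aw; apply: mem_prodv (memvf _) (subvP IH _ Aw).
Qed.

Lemma lcs_le i j : (i <= j)%N -> (lcs mul j <= lcs mul i)%VS.
Proof.
move/subnK <-; elim: (j - i)%N => [|k IH]; first exact: subvv.
by rewrite addSn; apply: subv_trans (lcs_subS _) IH.
Qed.

(* If a subalgebra K supplements A^2, it supplements every A^(j+1):
   A = K + A^(j+1) gives A^2 = A A <= K + A^(j+2), hence A = K + A^(j+2). *)
Lemma supplement_lcs (K : {vspace V}) :
  subalgebra mul K -> (K + prodv mul fullv fullv)%VS = fullv ->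
  forall j, (K + lcs mul j.+1)%VS = fullv.
Proof.
move=> Ksub KA2; elim=> // j IH.
have A2 : (prodv mul fullv fullv <= K + lcs mul j.+2)%VS.
  apply: prodv_sub => u w _ _.
  have /memv_addP [k1 Kk1 [b1 Ab1 ->]] : u \in (K + lcs mul j.+1)%VS by rewrite IH memvf.
  have /memv_addP [k2 Kk2 [b2 Ab2 ->]] : w \in (K + lcs mul j.+1)%VS by rewrite IH memvf.
  rewrite mulDl mulDr -addrA; apply: memv_add; first exact: Ksub.
  apply: memvD; first by apply: mem_prodv (memvf _) Ab2.
  by have := @lcs_mul j.+1 0 _ (k2 + b2) Ab1 (memvf _); rewrite addn0.
by apply/eqP; rewrite eqEsubv subvf /= -{1}KA2 subv_add addvSl A2.
Qed.

Lemma nilpotent_condition_k : nilpotent_alg mul -> condition_k mul.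
Proof.
move=> [t At] K Ksub KA2; have := supplement_lcs Ksub KA2 t.
have -> : lcs mul t.+1 = 0%VS by apply/eqP; rewrite -subv0 -At lcs_subS.
by rewrite addv0.
Qed.

Lemma Lmul_derivation x y z : Lmul x (mul y z) = mul (Lmul x y) z + mul y (Lmul x z).
Proof. by rewrite !LmulE mul_leibniz. Qed.

(* Under condition k every left multiplication L_x is nilpotent: the Fitting
   null component of L_x is a subalgebra (L_x being a derivation) and the
   Fitting one component lies in A^2, so condition k forces it to be A. *)
Lemma condition_k_Lmul_nilpotent :
  condition_k mul -> forall x v, iter dimV.+1 (mul x) v = 0.
Proof.
move=> condk x v; set N := dimV.+1; set f := Lmul x.
have le_dN : (dimV <= N)%N by [].
have Ksub : subalgebra mul (lker (fpow f N)).
  move=> y z Ky Kz; rewrite -(lker_fpow_stable _ N le_dN) memv_ker fpowE.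
  move: Ky Kz; rewrite !memv_ker !fpowE => /eqP fy /eqP fz.
  by apply/eqP/(derivation_nil (Lmul_derivation x)).
have imA2 : (limg (fpow f N) <= prodv mul fullv fullv)%VS.
  apply/subvP => _ /memv_imgP [u _ ->].
  by rewrite fpowE iterS LmulE; apply: mem_prodv; apply: memvf.
have KA2 : (lker (fpow f N) + prodv mul fullv fullv = fullv)%VS.
  apply/eqP; rewrite eqEsubv subvf /= -{1}(fitting_decomposition f le_dN).
  exact: addvS.
by apply/eqP; rewrite iter_LmulE -memv_ker (condk _ Ksub KA2) memvf.
Qed.

(* The left annihilator of A: the x with x A = 0.  By the Leibniz identity it
   contains all squares, hence all symmetrised products x y + y x. *)
Definition lann : {vspace V} := lker (linfun Lmul).

Lemma lannP s : reflect (forall v, mul s v = 0) (s \in lann).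
Proof.
rewrite memv_ker lfunE /=; apply: (iffP eqP) => [Ls0 v | Ls0].
  by rewrite -LmulE Ls0 zero_lfunE.
by apply/lfunP => v; rewrite LmulE Ls0 zero_lfunE.
Qed.

Lemma square_lann x : mul x x \in lann.
Proof.
by apply/lannP => v; apply: (addIr (mul x (mul x v))); rewrite add0r -mul_leibniz.
Qed.

Lemma sym_lann x y : mul x y + mul y x \in lann.
Proof.
have := square_lann (x + y); rewrite mulDl !mulDr -addrA.
by rewrite (rpredDl _ (square_lann x)) addrA (rpredDr _ (square_lann y)).
Qed.

Definition acts_on (S W : {vspace V}) : Prop :=
  forall s w, s \in S -> w \in W -> mul s w \in W.

(* If M contains lann and M y <= M, then also y M <= M and, since y y is in
   lann, M + F y is again a subalgebra. *)
Lemma subalgebra_add_line (M : {vspace V}) y :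
  subalgebra mul M -> (lann <= M)%VS -> (forall m, m \in M -> mul m y \in M) ->
  subalgebra mul (M + <[y]>)%VS.
Proof.
move=> Msub lannM My.
have yM m : m \in M -> mul y m \in M.
  move=> Mm; rewrite -[mul y m](addKr (mul m y)) addrC.
  by rewrite memvB ?My // (subvP lannM) // addrC sym_lann.
move=> u v /memv_addP [m1 Mm1 [c1 /vlineP [a1 ->] ->]].
move=> /memv_addP [m2 Mm2 [c2 /vlineP [a2 ->] ->]].
have yy : mul y y \in M by apply: (subvP lannM); apply: square_lann.
apply: (subvP (addvSl M <[y]>)).
rewrite !mulDl !mulDr !mulZl !mulZr !memvD ?memvZ //.
- exact: Msub.
- exact: My.
- exact: yM.
Qed.

Section Engel.
Hypothesis Lmul_nil : forall x v, exists k, iter k (mul x) v = 0.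

(* Key step of Engel's theorem: if M w <= W2, M y <= M and y stabilises W2,
   then the iterates y^k w all satisfy M y^k w <= W2 (Leibniz identity), and
   the last iterate outside W2 (it exists since L_y is nilpotent) is also sent
   into W2 by y. *)
Lemma iterate_escape (M W1 W2 : {vspace V}) y w :
  (forall m, m \in M -> mul m y \in M) ->
  (forall v, v \in W1 -> mul y v \in W1) -> (forall v, v \in W2 -> mul y v \in W2) ->
  w \in W1 -> w \notin W2 -> (forall m, m \in M -> mul m w \in W2) ->
  exists v, [/\ v \in W1, v \notin W2, forall m, m \in M -> mul m v \in W2
              & mul y v \in W2].
Proof.
move=> My yW1 yW2 W1w W2w' Mw.
have iterate k : iter k (mul y) w \in W1 /\
    forall m, m \in M -> mul m (iter k (mul y) w) \in W2.
  elim: k => [|k [W1k Mk]] //=; split; first exact: yW1.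
  move=> m Mm; rewrite mul_leibniz memvD //; first exact: Mk (My _ Mm).
  exact: yW2 (Mk _ Mm).
have reach : exists k, iter k (mul y) w \in W2.
  by have [k yk] := Lmul_nil y w; exists k; rewrite yk mem0v.
case: (ex_minnP reach) => [[|k] W2k mink]; first by rewrite (negbTE W2w') in W2k.
have [W1k Mk] := iterate k.
exists (iter k (mul y) w); split=> //.
by apply/negP => /mink; rewrite ltnn.
Qed.

(* By induction on \dim S: take a maximal
   proper subalgebra M of S containing lann; the induction hypothesis gives
   y in S \ M with M y <= M, so S = M + F y, and then iterate_escape. *)
Lemma engel_step n (S : {vspace V}) :
  (\dim S < n)%N -> subalgebra mul S -> (lann <= S)%VS ->
  forall W1 W2 : {vspace V}, (W2 <= W1)%VS -> W2 != W1 ->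
  acts_on S W1 -> acts_on S W2 ->
  exists w, [/\ w \in W1, w \notin W2 & forall s, s \in S -> mul s w \in W2].
Proof.
elim: n S => // n IH S dimS Ssub lannS W1 W2 sW21 neW21 SW1 SW2.
have [w0 W1w0 W2w0'] : exists2 w, w \in W1 & w \notin W2.
  by apply/subvPn; apply: contra neW21 => sW12; apply/eqP/subv_anti/andP.
have [Slann | Slann'] := boolP (S <= lann)%VS.
  by exists w0; split=> // s /(subvP Slann) /lannP ->; apply: mem0v.
have lann_sub : subalgebra mul lann by move=> s t /lannP ->; rewrite mem0v.
have neS : lann != S by apply: contraNneq Slann' => <-.
have [M [[Msub lannM] sMS neMS maxM]] := @exists_maximal_proper _ _
  (fun X => subalgebra mul X /\ (lann <= X)%VS) S lann (conj lann_sub (subvv _)) lannS neS.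
have dimM : (\dim M < n)%N.
  rewrite -ltnS (leq_trans _ dimS) // ltnS.
  by rewrite ltn_neqAle (dimv_leqif_eq sMS) neMS dimvS.
have actsM X : acts_on S X -> acts_on M X by move=> SX m x /(subvP sMS); apply: SX.
have [y [Sy My' yM]] := IH M dimM Msub lannM S M sMS neMS (actsM S Ssub) Msub.
have defS : (M + <[y]>)%VS = S.
  apply: maxM => //; split; first exact: subalgebra_add_line.
  exact: subv_trans lannM (addvSl M <[y]>).
have [w [W1w W2w' Mw]] := IH M dimM Msub lannM W1 W2 sW21 neW21 (actsM _ SW1) (actsM _ SW2).
have [v [W1v W2v' Mv yv]] :=
  iterate_escape yM (SW1 y ^~ Sy) (SW2 y ^~ Sy) W1w W2w' Mw.
exists v; split=> // s; rewrite -defS => /memv_addP [m Mm [_ /vlineP [a ->] ->]].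
by rewrite mulDl mulZl memvD ?memvZ //; apply: Mv.
Qed.

(* A nonzero left ideal B satisfies A B < B: take W maximal among the left
   ideals properly inside B; engel_step yields w in B \ W with A w <= W, so
   B = W + F w and A B <= W. *)
Lemma left_ideal_shrinks (B : {vspace V}) :
  B != 0%VS -> acts_on fullv B -> prodv mul fullv B != B.
Proof.
move=> neB0 AB.
have A0 : acts_on fullv 0 by move=> s w _; rewrite memv0 => /eqP ->; rewrite mul0r mem0v.
have ne0B : 0%VS != B by rewrite eq_sym.
have [W [AW sWB neWB maxW]] := exists_maximal_proper A0 (sub0v B) ne0B.
have [w [Bw Ww' Aw]] := engel_step (ltnSn _) (fun s t _ _ => memvf (mul s t))
  (subvf lann) sWB neWB AB AW.
have Aline u x : x \in (W + <[w]>)%VS -> mul u x \in W.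
  move=> /memv_addP [y Wy [_ /vlineP [a ->] ->]].
  by rewrite mulDr mulZr memvD ?memvZ //; [apply: AW (memvf u) Wy | apply: Aw; apply: memvf].
have defB : (W + <[w]>)%VS = B.
  apply: maxW => // u x _ Wwx; apply: (subvP (addvSl W <[w]>)); exact: Aline.
apply: contraNneq neWB => ABB; apply/eqP/subv_anti; rewrite sWB /= -ABB.
by apply: prodv_sub => u x _; rewrite -defB; apply: Aline.
Qed.

(* Engel's theorem: the lower central series reaches 0 within \dim A steps.
   It stalls at some j <= \dim A, and a stalled nonzero term would be a left
   ideal B with A B = B. *)
Lemma lcs_vanishes : lcs mul dimV = 0%VS.
Proof.
have [j le_jd eq_j] := decreasing_chain_stalls lcs_subS.
have Aj : acts_on fullv (lcs mul j).
  by move=> s w _ Aw; apply: (subvP (lcs_subS j)); apply: mem_prodv (memvf s) Aw.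
have lcs_j0 : lcs mul j = 0%VS.
  have [// | nz] := eqVneq (lcs mul j) 0%VS.
  by move: (left_ideal_shrinks nz Aj); rewrite {2}eq_j eqxx.
by apply/eqP; rewrite -subv0 -lcs_j0 lcs_le.
Qed.

End Engel.

Lemma condition_k_nilpotent : condition_k mul -> nilpotent_alg mul.
Proof.
move=> condk; exists dimV; apply: lcs_vanishes => x v.
by exists dimV.+1; apply: condition_k_Lmul_nilpotent.
Qed.

End BilinearProduct.

Theorem mainTheorem3 (F : fieldType) (V : vectType F) (mul : V -> V -> V) :
  leibniz_algebra mul -> (nilpotent_alg mul <-> condition_k mul).
Proof.
move=> [mul_bilinear mul_leibniz]; split.
- exact: nilpotent_condition_k.
- exact: condition_k_nilpotent.
Qed.
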